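(* Let $\rho=\sum_{i=1}^n P_i|e_i\rangle\langle e_i|$ be a state with finite energies $E_1,\dots,E_n$. Let $Z=\sum_i e^{-E_i/kT}$ and $A_i=e^{-E_i/kT}/Z$, and let $\sigma^T=\sum_i A_i|e_i\rangle\langle e_i|$ be the Gibbs state on the same energy levels. Then for every $\varepsilon\in[0,1)$, $$W^\varepsilon(\rho\to\sigma^T)=kT\ln 2\; D_0^\varepsilon(\rho\|\sigma^T).$$
   Context: Conventions. The constants $k>0$ (Boltzmann's constant) and $T>0$ (temperature) are fixed. A state is a finite-level system with energies $E_1,\dots,E_d\in\mathbb{R}\cup\{+\infty\}$, not all $+\infty$, together with a diagonal density matrix $\rho=\sum_i\lambda_i|e_i\rangle\langle e_i|$. Equivalently, it is a probability vector $(\lambda_i)$ over the levels, and we require $\lambda_i=0$ whenever $E_i=+\infty$. Gibbs rescaling. $G^T(\rho)$ is the function on $[0,\infty)$ built as follows. Each level $i$ with $E_i<\infty$ is represented by a block: an interval of length $e^{-E_i/kT}$ on which the function takes the constant value $\lambda_i e^{E_i/kT}$, so the block has area $\lambda_i$. The blocks are placed consecutively starting at $0$, in order of nonincreasing height. The function is $0$ beyond $Z=\sum_{i:E_i<\infty}e^{-E_i/kT}$. Thus $G^T(\rho)$ is a nonincreasing probability density supported in $[0,Z]$. Relative mixedness. For nonincreasing integrable functions $f,g\ge 0$ on $[0,\infty)$, $$M(f\|g):=\max\Big\{m>0:\ \int_0^l f(x)\,dx\ge\int_0^{lm}g(x)\,dx\ \text{for all } l\ge 0\Big\}.$$ For $\varepsilon\in[0,1)$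 define $$W^\varepsilon(\rho\to\sigma):=kT\ln M\big(G^T(\rho)/(1-\varepsilon)\,\big\|\,G^T(\sigma)\big).$$ Smooth relative min-entropy. For commuting diagonal $\rho$ and $\sigma^T$ as in the claim, the (fractional) smooth relative entropy of order $0$ is $$D_0^\varepsilon(\rho\|\sigma^T):=-\log_2\min\Big\{\sum_i t_iA_i:\ t\in[0,1]^n,\ \sum_i t_iP_i\ge 1-\varepsilon\Big\}.$$ *)

From Stdlib Require Import Reals Lra.
Open Scope R_scope.

Fixpoint rsum (n : nat) (f : nat -> R) : R :=
  match n with
  | O => 0
  | S m => rsum m f + f m
  end.

Definition log2 (x : R) : R := ln x / ln 2.

Definition bwidth (k T : R) (E : nat -> R) (i : nat) : R := exp (- E i / (k * T)).
Definition partZ (k T : R) (n : nat) (E : nat -> R) : R := rsum n (bwidth k T E).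
Definition gibbsA (k T : R) (n : nat) (E : nat -> R) (i : nat) : R :=
  bwidth k T E i / partZ k T n E.

Definition is_perm (n : nat) (s : nat -> nat) : Prop :=
  (forall j, (j < n)%nat -> (s j < n)%nat) /\
  (forall j1 j2, (j1 < n)%nat -> (j2 < n)%nat -> s j1 = s j2 -> j1 = j2).

(* g is the Gibbs rescaling G^T(rho) of the state with (finite) energies E_0..E_{n-1}
   and populations lam: blocks of width e^{-E_i/kT} and height lam_i e^{E_i/kT},
   placed consecutively from 0 in nonincreasing order of height (the order is
   given by the permutation s), and g = 0 beyond Z. *)
Definition IsGibbsRescaling (k T : R) (n : nat) (E lam : nat -> R) (g : R -> R) : Prop :=
  exists s : nat -> nat,
    is_perm n s /\
    (forall j, (S j < n)%nat ->
       lam (s (S j)) * exp (E (s (S j)) / (k * T)) <= lam (s j) * exp (E (s j) / (k * T))) /\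
    (forall j x, (j < n)%nat ->
       rsum j (fun t => bwidth k T E (s t)) <= x <
       rsum j (fun t => bwidth k T E (s t)) + bwidth k T E (s j) ->
       g x = lam (s j) * exp (E (s j) / (k * T))) /\
    (forall x, partZ k T n E <= x -> g x = 0).

Definition IntegralIs (f : R -> R) (a b v : R) : Prop :=
  exists pr : Riemann_integrable f a b, RiemannInt pr = v.

Definition IsMaxOf (S : R -> Prop) (m : R) : Prop := S m /\ forall m', S m' -> m' <= m.
Definition IsMinOf (S : R -> Prop) (m : R) : Prop := S m /\ forall m', S m' -> m <= m'.

Definition mixed_set (f g : R -> R) (m : R) : Prop :=
  0 < m /\
  forall l, 0 <= l -> forall v1 v2,
    IntegralIs f 0 l v1 -> IntegralIs g 0 (l * m) v2 -> v2 <= v1.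

Definition RelMixednessIs (f g : R -> R) (m : R) : Prop := IsMaxOf (mixed_set f g) m.

(* W^eps(rho -> sigma) = w, where grho = G^T(rho), gsigma = G^T(sigma) *)
Definition WorkIs (k T eps : R) (grho gsigma : R -> R) (w : R) : Prop :=
  exists m, RelMixednessIs (fun x => grho x / (1 - eps)) gsigma m /\ w = k * T * ln m.

Definition D0_lp_set (n : nat) (P A : nat -> R) (eps : R) (v : R) : Prop :=
  exists t : nat -> R,
    (forall i, (i < n)%nat -> 0 <= t i <= 1) /\
    rsum n (fun i => t i * P i) >= 1 - eps /\
    v = rsum n (fun i => t i * A i).

Definition D0Is (n : nat) (P A : nat -> R) (eps : R) (d : R) : Prop :=
  exists mu, IsMinOf (D0_lp_set n P A eps) mu /\ d = - log2 mu.

(* List the levels of rho by nonincreasing block height P_i e^{E_i/kT}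
   (the order s of its Gibbs rescaling).  Let J be the block in which the sorted
   populations first accumulate to 1 - eps and let x be the point of that block where
   the cumulative mass F(x) = int_0^x G^T(rho) equals 1 - eps (the "quantile").
   Both sides are then computed in terms of x and Z = sum_i e^{-E_i/kT}:
   - the Gibbs rescaling of sigma^T is the flat density 1/Z on [0, Z], while F(l)/l
     is nonincreasing because G^T(rho) is; hence M(G^T(rho)/(1-eps) || G^T(sigma^T)) = Z/x;
   - the linear program defining D_0^eps is a fractional knapsack: after reindexing
     by s, the greedy choice (all levels before J, a fraction of level J) is optimal,
     with value x/Z. *)

From Coquelicot Require Import Coquelicot.
From Stdlib Require Import Reals Lra Lia List Permutation.
Open Scope R_scope.

Lemma rsum_ext n f g : (forall i, (i < n)%nat -> f i = g i) -> rsum n f = rsum n g.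
Proof.
  induction n as [|n IH]; intros Hfg; simpl; [reflexivity|].
  rewrite IH by (intros; apply Hfg; lia). rewrite Hfg by lia. reflexivity.
Qed.

Lemma rsum_le n f g : (forall i, (i < n)%nat -> f i <= g i) -> rsum n f <= rsum n g.
Proof.
  induction n as [|n IH]; intros Hfg; simpl; [lra|].
  assert (rsum n f <= rsum n g) by (apply IH; intros; apply Hfg; lia).
  specialize (Hfg n ltac:(lia)); lra.
Qed.

Lemma rsum_minus n f g : rsum n (fun i => f i - g i) = rsum n f - rsum n g.
Proof. induction n as [|n IH]; simpl; [lra|]. rewrite IH; lra. Qed.

Lemma rsum_scal n c f : rsum n (fun i => c * f i) = c * rsum n f.
Proof. induction n as [|n IH]; simpl; [lra|]. rewrite IH; lra. Qed.

Lemma rsum_prefix_le n f i j :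
  (forall t, (t < n)%nat -> 0 <= f t) -> (i <= j <= n)%nat -> rsum i f <= rsum j f.
Proof.
  intros Hf [Hij Hjn]; induction Hij as [|m Hm IH]; [lra|].
  simpl; specialize (Hf m ltac:(lia)); specialize (IH ltac:(lia)); lra.
Qed.

Lemma rsum_trunc n J f : (J <= n)%nat ->
  rsum n (fun j => if (j <? J)%nat then f j else 0) = rsum J f.
Proof.
  induction 1 as [|m Hm IH]; simpl.
  - apply rsum_ext; intros i Hi; destruct (Nat.ltb_spec i J); [reflexivity|lia].
  - rewrite IH; destruct (Nat.ltb_spec m J); [lia|lra].
Qed.

Lemma rsum_step n J f b : (J < n)%nat ->
  rsum n (fun j => if (j <? J)%nat then f j else if (j =? J)%nat then b else 0) = rsum J f + b.
Proof.
  induction 1 as [|m Hm IH]; simpl.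
  - rewrite Nat.ltb_irrefl, Nat.eqb_refl; f_equal.
    apply rsum_ext; intros i Hi; destruct (Nat.ltb_spec i J); [reflexivity|lia].
  - rewrite IH; destruct (Nat.ltb_spec m J); [lia|]; destruct (Nat.eqb_spec m J); [lia|lra].
Qed.

Lemma rsum_as_fold n f : rsum n f = fold_right Rplus 0 (map f (seq 0 n)).
Proof.
  induction n as [|n IH]; [reflexivity|].
  rewrite seq_S, map_app, fold_right_app; simpl; rewrite IH.
  generalize (map f (seq 0 n)); intros l; induction l as [|x l IHl]; simpl; [lra|].
  rewrite <- IHl; lra.
Qed.

Lemma fold_sum_perm l1 l2 : Permutation l1 l2 -> fold_right Rplus 0 l1 = fold_right Rplus 0 l2.
Proof. induction 1; simpl; lra. Qed.

Lemma perm_seq n s : is_perm n s -> Permutation (map s (seq 0 n)) (seq 0 n).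
Proof.
  intros [Hrange Hinj]; apply Permutation_map_same_l.
  - apply FinFun.Injective_map_NoDup_in; [|apply seq_NoDup].
    intros x y Hx Hy; apply in_seq in Hx, Hy; apply Hinj; lia.
  - intros y Hy; apply in_map_iff in Hy as [x [<- Hx]]; apply in_seq in Hx; apply in_seq.
    specialize (Hrange x ltac:(lia)); lia.
Qed.

Lemma rsum_perm n s f : is_perm n s -> rsum n (fun j => f (s j)) = rsum n f.
Proof.
  intros Hs; rewrite !rsum_as_fold, <- (map_map s f).
  apply fold_sum_perm, Permutation_map, perm_seq, Hs.
Qed.

(* [preimage s i m] is the last [j < m] with [s j = i] (or 0): an explicit inverse of a permutation. *)
Fixpoint preimage (s : nat -> nat) (i m : nat) : nat :=
  match m with
  | O => O
  | S m' => if (s m' =? i)%nat then m' else preimage s i m'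
  end.

Lemma preimage_lt s i m : (0 < m)%nat -> (preimage s i m < m)%nat.
Proof.
  induction m as [|m IH]; intros Hm; simpl; [lia|].
  destruct (s m =? i)%nat; [lia|]. destruct m; [simpl; lia|]. specialize (IH ltac:(lia)); lia.
Qed.

Lemma preimage_inv n s j : is_perm n s -> (j < n)%nat -> preimage s (s j) n = j.
Proof.
  intros [_ Hinj] Hj.
  assert (Hgen : forall m, (j < m <= n)%nat -> preimage s (s j) m = j).
  { induction m as [|m IH]; intros Hm; simpl; [lia|].
    destruct (Nat.eqb_spec (s m) (s j)) as [Heq|Hne].
    - apply Hinj; [lia|lia|exact Heq].
    - apply IH. destruct (Nat.eq_dec j m) as [->|]; [contradiction|lia]. }
  apply Hgen; lia.
Qed.

Lemma lp_set_reindex n s P A eps v : is_perm n s ->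
  D0_lp_set n P A eps v <-> D0_lp_set n (fun j => P (s j)) (fun j => A (s j)) eps v.
Proof.
  intros Hs; split.
  - intros [t [Ht [Hc ->]]]; exists (fun j => t (s j)); split; [|split].
    + intros j Hj; apply Ht, (proj1 Hs), Hj.
    + rewrite (rsum_perm n s (fun i => t i * P i)) by exact Hs; exact Hc.
    + symmetry; apply (rsum_perm n s (fun i => t i * A i)), Hs.
  - intros [t [Ht [Hc ->]]]; exists (fun i => t (preimage s i n)).
    assert (Hback : forall f, rsum n (fun i => t (preimage s i n) * f i) = rsum n (fun j => t j * f (s j))).
    { intros f; rewrite <- (rsum_perm n s (fun i => t (preimage s i n) * f i)) by exact Hs.
      apply rsum_ext; intros j Hj; rewrite (preimage_inv n s j Hs Hj); reflexivity. }
    split; [|split].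
    + intros i Hi; apply Ht, preimage_lt; lia.
    + rewrite Hback; exact Hc.
    + symmetry; apply Hback.
Qed.

Lemma IsMinOf_ext (S1 S2 : R -> Prop) m : (forall v, S1 v <-> S2 v) -> IsMinOf S1 m -> IsMinOf S2 m.
Proof. intros Heq [Hm Hmin]; split; [apply Heq, Hm|intros v Hv; apply Hmin, Heq, Hv]. Qed.

Lemma IsMaxOf_ext (S1 S2 : R -> Prop) m : (forall v, S1 v <-> S2 v) -> IsMaxOf S1 m -> IsMaxOf S2 m.
Proof. intros Heq [Hm Hmax]; split; [apply Heq, Hm|intros v Hv; apply Hmax, Heq, Hv]. Qed.

Lemma antitone_of_step n (h : nat -> R) :
  (forall j, (S j < n)%nat -> h (S j) <= h j) -> forall i j, (i <= j)%nat -> (j < n)%nat -> h j <= h i.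
Proof.
  intros Hstep i j Hij; induction Hij as [|m Hm IH]; intros Hn; [lra|].
  specialize (Hstep m Hn); specialize (IH ltac:(lia)); lra.
Qed.

(* Left edge of block [J] plus the length needed there, at height [h J], to complete the
   mass [c] (blocks have widths [w] and heights [h]). *)
Definition quantile (w h : nat -> R) (J : nat) (c : R) : R :=
  rsum J w + (c - rsum J (fun t => h t * w t)) / h J.

(* Fractional knapsack: minimise [sum t_j a_j] over [t in [0,1]^n] subject to
   [sum t_j p_j >= 1 - eps], where the price ratios [h j = p j / a j] are nonincreasing
   and [J] is the item at which the greedy choice reaches [1 - eps]. *)
Section FractionalKnapsack.
Variables (n J : nat) (p a h : nat -> R) (eps : R).
Hypotheses (p_eq : forall j, (j < n)%nat -> p j = h j * a j)
  (a_pos : forall j, (j < n)%nat -> 0 < a j)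
  (h_noninc : forall j, (S j < n)%nat -> h (S j) <= h j)
  (J_lt : (J < n)%nat)
  (below_J : rsum J (fun t => h t * a t) < 1 - eps)
  (reach_J : 1 - eps <= rsum (S J) (fun t => h t * a t)).

Local Notation Q := (rsum J (fun t => h t * a t)).

Lemma knapsack_height_pos : 0 < h J.
Proof.
  simpl in reach_J; pose proof (a_pos J J_lt).
  destruct (Rle_lt_dec (h J) 0); [nra|assumption].
Qed.

(* The greedy choice: items before [J] completely, a fraction of item [J]. *)
Lemma knapsack_feasible : D0_lp_set n p a eps (quantile a h J (1 - eps)).
Proof.
  pose proof knapsack_height_pos as HhJ; pose proof (a_pos J J_lt) as HaJ.
  set (theta := (1 - eps - Q) / (h J * a J)).
  assert (Htheta : 0 < theta <= 1).
  { simpl in reach_J; unfold theta; split; [apply Rdiv_lt_0_compat; nra|].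
    apply Rcomplements.Rle_div_l; nra. }
  exists (fun j => if (j <? J)%nat then 1 else if (j =? J)%nat then theta else 0).
  assert (Hsum : forall f, rsum n (fun j => (if (j <? J)%nat then 1 else if (j =? J)%nat then theta else 0) * f j)
                         = rsum J f + theta * f J).
  { intros f; rewrite <- (rsum_step n J f (theta * f J)) by exact J_lt.
    apply rsum_ext; intros j _.
    destruct (Nat.ltb_spec j J); [ring|]; destruct (Nat.eqb_spec j J) as [->|]; ring. }
  split; [|split].
  - intros j _; destruct (j <? J)%nat; [lra|]; destruct (j =? J)%nat; lra.
  - rewrite Hsum, p_eq by exact J_lt. rewrite (rsum_ext J p (fun t => h t * a t)) by (intros; apply p_eq; lia).
    unfold theta; right; field; lra.
  - rewrite Hsum; unfold quantile, theta; field; lra.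
Qed.

(* Exchange argument with the critical ratio [h J]: each term [t_j (p_j - h J a_j)] is at
   most [p_j - h J a_j] for [j < J] and at most 0 for [j >= J], so any feasible [t] has
   [h J * sum t_j a_j >= 1 - eps - Q + h J * sum_{j<J} a_j]. *)
Lemma knapsack_optimal v : D0_lp_set n p a eps v -> quantile a h J (1 - eps) <= v.
Proof.
  intros [t [Ht [Hc ->]]]; pose proof knapsack_height_pos as HhJ.
  assert (Hexchange : rsum n (fun j => t j * p j - h J * (t j * a j))
                      <= rsum n (fun j => if (j <? J)%nat then h j * a j - h J * a j else 0)).
  { apply rsum_le; intros j Hj; rewrite p_eq by exact Hj.
    pose proof (Ht j Hj); pose proof (a_pos j Hj).
    destruct (Nat.ltb_spec j J).
    - pose proof (antitone_of_step n h h_noninc j J ltac:(lia) J_lt).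
      assert (0 <= (1 - t j) * ((h j - h J) * a j)) by (apply Rmult_le_pos; [lra|apply Rmult_le_pos; lra]); nra.
    - pose proof (antitone_of_step n h h_noninc J j ltac:(lia) Hj).
      assert (0 <= t j * ((h J - h j) * a j)) by (apply Rmult_le_pos; [lra|apply Rmult_le_pos; lra]); nra. }
  rewrite rsum_trunc, rsum_minus, rsum_minus, rsum_scal, rsum_scal in Hexchange by lia.
  unfold quantile.
  apply (Rmult_le_reg_l (h J)); [exact HhJ|].
  replace (h J * (rsum J a + (1 - eps - Q) / h J)) with (h J * rsum J a + (1 - eps - Q)) by (field; lra).
  lra.
Qed.

Lemma knapsack_minimum : IsMinOf (D0_lp_set n p a eps) (quantile a h J (1 - eps)).
Proof. split; [apply knapsack_feasible|apply knapsack_optimal]. Qed.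

End FractionalKnapsack.

Record StepProfile (n : nat) (w h : nat -> R) (g : R -> R) : Prop := {
  width_pos : forall j, 0 < w j;
  height_nonneg : forall j, (j < n)%nat -> 0 <= h j;
  height_noninc : forall j, (S j < n)%nat -> h (S j) <= h j;
  value_on_block : forall j x, (j < n)%nat -> rsum j w <= x < rsum j w + w j -> g x = h j;
  value_beyond : forall x, rsum n w <= x -> g x = 0 }.

Arguments width_pos {n w h g}.
Arguments height_nonneg {n w h g}.
Arguments height_noninc {n w h g}.
Arguments value_on_block {n w h g}.
Arguments value_beyond {n w h g}.

Lemma RInt_constant a b c : RInt (fun _ => c) a b = (b - a) * c.
Proof. exact (RInt_const a b c). Qed.

Section StepProfileIntegrals.
Variables (n : nat) (w h : nat -> R) (g : R -> R).
Hypothesis Hg : StepProfile n w h g.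

Local Notation C j := (rsum j w).
Local Notation Q j := (rsum j (fun t => h t * w t)).

Lemma edge_le i j : (i <= j)%nat -> C i <= C j.
Proof.
  induction 1 as [|m Hm IH]; simpl; [lra|].
  pose proof (width_pos Hg m); lra.
Qed.

Lemma edge_nonneg j : 0 <= C j.
Proof. apply (edge_le 0 j); lia. Qed.

Lemma block_cover m x : 0 <= x < C m -> exists j, (j < m)%nat /\ C j <= x < C (S j).
Proof.
  induction m as [|m IH]; intros Hx; simpl in Hx; [lra|].
  destruct (Rlt_le_dec x (C m)) as [Hlt|Hle].
  - destruct (IH ltac:(lra)) as [j [Hj Hjx]]; exists j; split; [lia|exact Hjx].
  - exists m; split; [lia|simpl; lra].
Qed.

Lemma profile_nonneg x : 0 <= x -> 0 <= g x.
Proof.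
  intros Hx; destruct (Rlt_le_dec x (C n)).
  - destruct (block_cover n x ltac:(lra)) as [j [Hj Hjx]].
    rewrite (value_on_block Hg j x Hj Hjx); apply (height_nonneg Hg), Hj.
  - rewrite (value_beyond Hg x) by assumption; lra.
Qed.

Lemma profile_above_height j y : (j < n)%nat -> 0 <= y < C (S j) -> h j <= g y.
Proof.
  intros Hj Hy.
  assert (Hyn : y < C n) by (pose proof (edge_le (S j) n ltac:(lia)); lra).
  destruct (block_cover n y ltac:(lra)) as [i [Hi Hiy]].
  rewrite (value_on_block Hg i y Hi Hiy).
  apply (antitone_of_step n h (height_noninc Hg)); [|exact Hj].
  destruct (Nat.le_gt_cases i j) as [|Hji]; [assumption|].
  pose proof (edge_le (S j) i Hji); lra.
Qed.

Lemma profile_noninc x y : 0 <= x <= y -> g y <= g x.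
Proof.
  intros Hxy; destruct (Rlt_le_dec y (C n)).
  - destruct (block_cover n y ltac:(lra)) as [j [Hj Hjy]].
    rewrite (value_on_block Hg j y Hj Hjy).
    apply profile_above_height; [exact Hj|lra].
  - rewrite (value_beyond Hg y) by assumption; apply profile_nonneg; lra.
Qed.

Lemma is_RInt_block j a b : (j < n)%nat -> C j <= a <= b -> b <= C (S j) ->
  is_RInt g a b ((b - a) * h j).
Proof.
  intros Hj Ha Hb; apply (is_RInt_ext (fun _ => h j)); [|exact (is_RInt_const a b (h j))].
  intros x Hx; rewrite Rmin_left, Rmax_right in Hx by lra; simpl in Hb.
  symmetry; apply (value_on_block Hg j x Hj); lra.
Qed.

Lemma is_RInt_beyond a b : C n <= a <= b -> is_RInt g a b 0.
Proof.
  intros Hab; apply (is_RInt_ext (fun _ => 0)).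
  - intros x Hx; rewrite Rmin_left, Rmax_right in Hx by lra.
    symmetry; apply (value_beyond Hg); lra.
  - pose proof (is_RInt_const a b 0) as H0.
    change (scal (b - a) 0) with ((b - a) * 0) in H0; rewrite Rmult_0_r in H0; exact H0.
Qed.

Lemma is_RInt_upto_edge j : (j <= n)%nat -> is_RInt g 0 (C j) (Q j).
Proof.
  induction j as [|j IH]; intros Hj; [exact (is_RInt_point g 0)|].
  simpl; apply (is_RInt_Chasles g 0 (C j)); [apply IH; lia|].
  replace (h j * w j) with ((C (S j) - C j) * h j) by (simpl; ring).
  apply is_RInt_block; [lia| |lra]; split; [lra|apply edge_le; lia].
Qed.

Lemma profile_integrable a b : 0 <= a <= b -> ex_RInt g a b.
Proof.
  intros Hab.
  assert (Hall : ex_RInt g 0 (C n + b)).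
  { apply (ex_RInt_Chasles g 0 (C n)).
    - eexists; apply is_RInt_upto_edge; lia.
    - eexists; apply is_RInt_beyond; pose proof (edge_nonneg n); lra. }
  apply (ex_RInt_Chasles_2 g 0 a b); [lra|].
  apply (ex_RInt_Chasles_1 g 0 b (C n + b)); [pose proof (edge_nonneg n); lra|exact Hall].
Qed.

Lemma cumul_split a b : 0 <= a <= b -> RInt g 0 b = RInt g 0 a + RInt g a b.
Proof.
  intros Hab; symmetry; apply (RInt_Chasles g 0 a b); apply profile_integrable; lra.
Qed.

Lemma cumul_in_block j x : (j < n)%nat -> C j <= x <= C (S j) ->
  RInt g 0 x = Q j + (x - C j) * h j.
Proof.
  intros Hj Hx; rewrite (cumul_split (C j) x) by (pose proof (edge_nonneg j); lra).
  rewrite (is_RInt_unique g 0 (C j) (Q j)) by (apply is_RInt_upto_edge; lia).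
  f_equal; apply is_RInt_unique, is_RInt_block; [exact Hj|lra|lra].
Qed.

Lemma cumul_beyond y : C n <= y -> RInt g 0 y = Q n.
Proof.
  intros Hy; rewrite (cumul_split (C n) y) by (pose proof (edge_nonneg n); lra).
  rewrite (is_RInt_unique g 0 (C n) (Q n)) by (apply is_RInt_upto_edge; lia).
  rewrite (is_RInt_unique g (C n) y 0) by (apply is_RInt_beyond; lra); lra.
Qed.

Lemma cumul_growth_lower l L c : 0 <= l <= L -> (forall x, l < x < L -> c <= g x) ->
  RInt g 0 l + (L - l) * c <= RInt g 0 L.
Proof.
  intros HlL Hc; rewrite (cumul_split l L) by lra.
  assert ((L - l) * c <= RInt g l L); [|lra].
  rewrite <- (RInt_constant l L c); apply RInt_le; [lra|apply ex_RInt_const|apply profile_integrable; lra|exact Hc].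
Qed.

Lemma cumul_growth_upper l L c : 0 <= l <= L -> (forall x, l < x < L -> g x <= c) ->
  RInt g 0 L <= RInt g 0 l + (L - l) * c.
Proof.
  intros HlL Hc; rewrite (cumul_split l L) by lra.
  assert (RInt g l L <= (L - l) * c); [|lra].
  rewrite <- (RInt_constant l L c); apply RInt_le; [lra|apply profile_integrable; lra|apply ex_RInt_const|exact Hc].
Qed.

Lemma cumul_mono a b : 0 <= a <= b -> RInt g 0 a <= RInt g 0 b.
Proof.
  intros Hab; pose proof (cumul_growth_lower a b 0 Hab) as H.
  assert (RInt g 0 a + (b - a) * 0 <= RInt g 0 b) by (apply H; intros; apply profile_nonneg; lra); lra.
Qed.

(* Since the profile is nonincreasing, the average mass [F l / l] is nonincreasing in [l]. *)
Lemma cumul_star_shaped l L : 0 <= l <= L -> l * RInt g 0 L <= L * RInt g 0 l.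
Proof.
  intros HlL.
  assert (Hup : RInt g 0 L <= RInt g 0 l + (L - l) * g l)
    by (apply cumul_growth_upper; [lra|intros; apply profile_noninc; lra]).
  assert (Hlow : RInt g 0 0 + (l - 0) * g l <= RInt g 0 l)
    by (apply cumul_growth_lower; [lra|intros; apply profile_noninc; lra]).
  rewrite RInt_point in Hlow; change (zero : R) with 0 in Hlow.
  pose proof (profile_nonneg l ltac:(lra)); nra.
Qed.

Lemma cumul_linear_upper y : 0 <= y -> RInt g 0 y <= y * g 0.
Proof.
  intros Hy.
  assert (H : RInt g 0 y <= RInt g 0 0 + (y - 0) * g 0)
    by (apply cumul_growth_upper; [lra|intros; apply profile_noninc; lra]).
  rewrite RInt_point in H; change (zero : R) with 0 in H; lra.
Qed.

Section Quantile.
Variables (J : nat) (c : R).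
Hypotheses (J_lt : (J < n)%nat) (below_J : Q J < c) (reach_J : c <= Q (S J)).

Lemma crossing_height_pos : 0 < h J.
Proof.
  simpl in reach_J; pose proof (width_pos Hg J).
  destruct (Rle_lt_dec (h J) 0); [nra|assumption].
Qed.

Lemma quantile_in_block : C J < quantile w h J c <= C (S J).
Proof.
  pose proof crossing_height_pos; simpl in *; unfold quantile.
  assert (0 < (c - Q J) / h J) by (apply Rdiv_lt_0_compat; lra).
  assert ((c - Q J) / h J <= w J) by (apply Rcomplements.Rle_div_l; lra).
  lra.
Qed.

Lemma cumul_at_quantile : RInt g 0 (quantile w h J c) = c.
Proof.
  pose proof crossing_height_pos; pose proof quantile_in_block.
  rewrite (cumul_in_block J) by (exact J_lt || lra).
  unfold quantile.
  assert (Hr : (c - Q J) / h J * h J = c - Q J) by (field; lra); nra.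
Qed.

Lemma cumul_below_quantile l : 0 <= l < quantile w h J c -> RInt g 0 l < c.
Proof.
  intros Hl; pose proof crossing_height_pos; pose proof quantile_in_block.
  assert (Hgrow : RInt g 0 l + (quantile w h J c - l) * h J <= RInt g 0 (quantile w h J c)).
  { apply cumul_growth_lower; [lra|]; intros x Hx; apply profile_above_height; [exact J_lt|lra]. }
  rewrite cumul_at_quantile in Hgrow; nra.
Qed.

End Quantile.
End StepProfileIntegrals.

Definition cumul_mixed_set (F G : R -> R) (c m : R) : Prop :=
  0 < m /\ forall l, 0 <= l -> G (l * m) <= F l / c.

Section MixednessOfCumulatives.
Variables (F G : R -> R) (c x Z : R).
Hypotheses (c_pos : 0 < c) (x_pos : 0 < x) (Z_pos : 0 < Z)
  (F_mono : forall a b, 0 <= a <= b -> F a <= F b)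
  (F_star : forall l L, 0 <= l <= L -> l * F L <= L * F l)
  (F_at_x : F x = c)
  (F_below_x : forall l, 0 <= l < x -> F l < c)
  (G_linear : forall y, 0 <= y -> G y <= y / Z)
  (G_le_one : forall y, 0 <= y -> G y <= 1)
  (G_at_Z : G Z = 1).

Lemma ratio_mixed : cumul_mixed_set F G c (Z / x).
Proof.
  split; [apply Rdiv_lt_0_compat; assumption|]; intros l Hl.
  assert (Hlm : 0 <= l * (Z / x)) by (apply Rmult_le_pos; [lra|apply Rlt_le, Rdiv_lt_0_compat; assumption]).
  apply Rcomplements.Rle_div_r; [exact c_pos|].
  destruct (Rle_lt_dec x l) as [Hxl|Hlx].
  - pose proof (G_le_one _ Hlm); pose proof (F_mono x l ltac:(lra)); nra.
  - pose proof (G_linear _ Hlm) as HG; pose proof (F_star l x ltac:(lra)) as HF.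
    rewrite F_at_x in HF.
    replace (l * (Z / x) / Z) with (l / x) in HG by (field; lra).
    apply (Rle_trans _ (l / x * c)); [apply Rmult_le_compat_r; lra|].
    replace (l / x * c) with (l * c / x) by (field; lra).
    apply Rcomplements.Rle_div_l; [exact x_pos|]; lra.
Qed.

(* A ratio [m > Z / x] would force [F (Z / m) >= c * G Z = c] at the point [Z / m < x]. *)
Lemma ratio_maximal m : cumul_mixed_set F G c m -> m <= Z / x.
Proof.
  intros [Hm Hmix]; destruct (Rle_lt_dec m (Z / x)) as [|Hgt]; [assumption|exfalso].
  assert (Hl : 0 <= Z / m) by (apply Rlt_le, Rdiv_lt_0_compat; assumption).
  assert (Hlx : Z / m < x).
  { apply Rcomplements.Rlt_div_l; [exact Hm|].
    apply Rcomplements.Rlt_div_l in Hgt; [|exact x_pos]; lra. }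
  specialize (Hmix (Z / m) Hl); replace (Z / m * m) with Z in Hmix by (field; lra).
  rewrite G_at_Z in Hmix; apply Rcomplements.Rle_div_r in Hmix; [|exact c_pos].
  pose proof (F_below_x (Z / m) ltac:(lra)); lra.
Qed.

Lemma cumul_mixedness_max : IsMaxOf (cumul_mixed_set F G c) (Z / x).
Proof. split; [apply ratio_mixed|apply ratio_maximal]. Qed.

End MixednessOfCumulatives.

Lemma IntegralIs_RInt f a b v : IntegralIs f a b v -> v = RInt f a b.
Proof. intros [pr Hpr]; rewrite (RInt_Reals f a b pr); symmetry; exact Hpr. Qed.

Lemma RInt_IntegralIs f a b : ex_RInt f a b -> IntegralIs f a b (RInt f a b).
Proof. intros H; exists (ex_RInt_Reals_0 f a b H); symmetry; apply RInt_Reals. Qed.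

Lemma is_RInt_div (f : R -> R) a b c (v : R) :
  is_RInt f a b v -> is_RInt (fun x => f x / c) a b (v / c).
Proof.
  intros Hf; apply (is_RInt_ext (fun x => scal (/ c) (f x))).
  - intros x _; change (scal (/ c) (f x)) with (/ c * f x); apply Rmult_comm.
  - replace (v / c) with (scal (/ c) v) by (change (scal (/ c) v) with (/ c * v); apply Rmult_comm).
    exact (is_RInt_scal f a b (/ c) v Hf).
Qed.

Lemma mixed_set_cumulative f g c m : 0 < c ->
  (forall b, 0 <= b -> ex_RInt f 0 b) -> (forall b, 0 <= b -> ex_RInt g 0 b) ->
  mixed_set (fun x => f x / c) g m <-> cumul_mixed_set (RInt f 0) (RInt g 0) c m.
Proof.
  intros Hc Hf Hg; split; intros [Hm Hmix]; split; try exact Hm; intros l Hl.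
  - assert (Hlm : 0 <= l * m) by nra.
    apply (Hmix l Hl); [|apply RInt_IntegralIs, Hg, Hlm].
    destruct (Hf l Hl) as [v Hv].
    rewrite (is_RInt_unique f 0 l v Hv).
    exists (ex_RInt_Reals_0 _ _ _ (ex_intro _ _ (is_RInt_div f 0 l c v Hv))).
    rewrite <- RInt_Reals; apply is_RInt_unique, is_RInt_div, Hv.
  - intros v1 v2 H1 H2; apply IntegralIs_RInt in H1, H2; subst v1 v2.
    destruct (Hf l Hl) as [v Hv].
    rewrite (is_RInt_unique _ 0 l (v / c) (is_RInt_div f 0 l c v Hv)).
    rewrite <- (is_RInt_unique f 0 l v Hv); apply Hmix, Hl.
Qed.

Section FlatProfile.
Variables (n : nat) (w h : nat -> R) (g : R -> R).
Hypotheses (Hg : StepProfile n w h g) (n_pos : (0 < n)%nat)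
  (mass_one : rsum n (fun t => h t * w t) = 1) (first_height : h 0%nat = / rsum n w).

Local Notation Z := (rsum n w).

Lemma flat_support_pos : 0 < Z.
Proof. pose proof (edge_le n w h g Hg 1 n n_pos) as H; simpl in H; pose proof (width_pos Hg 0); lra. Qed.

Lemma flat_cumul_linear y : 0 <= y -> RInt g 0 y <= y / Z.
Proof.
  intros Hy; pose proof (cumul_linear_upper n w h g Hg y Hy) as H.
  rewrite (value_on_block Hg 0 0 n_pos), first_height in H
    by (simpl; pose proof (width_pos Hg 0); lra).
  exact H.
Qed.

Lemma flat_cumul_total : RInt g 0 Z = 1.
Proof. rewrite (cumul_beyond n w h g Hg) by lra; exact mass_one. Qed.

Lemma flat_cumul_le_one y : 0 <= y -> RInt g 0 y <= 1.
Proof.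
  intros Hy; pose proof flat_support_pos; destruct (Rle_lt_dec Z y).
  - rewrite (cumul_beyond n w h g Hg) by assumption; lra.
  - pose proof (flat_cumul_linear y Hy).
    assert (y / Z <= 1) by (apply Rcomplements.Rle_div_l; lra); lra.
Qed.

End FlatProfile.

Lemma bwidth_pos k T E i : 0 < bwidth k T E i.
Proof. apply exp_pos. Qed.

Lemma partZ_pos k T n E : (0 < n)%nat -> 0 < partZ k T n E.
Proof.
  intros Hn; unfold partZ; destruct n as [|n]; [lia|simpl].
  pose proof (rsum_prefix_le n (bwidth k T E) 0 n (fun t _ => Rlt_le _ _ (bwidth_pos k T E t)) ltac:(lia)).
  pose proof (bwidth_pos k T E n); simpl in *; lra.
Qed.

Lemma gibbsA_nonneg k T n E i : (0 < n)%nat -> 0 <= gibbsA k T n E i.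
Proof.
  intros Hn; apply Rlt_le, Rdiv_lt_0_compat; [apply bwidth_pos|apply partZ_pos, Hn].
Qed.

Lemma gibbsA_sum k T n E : (0 < n)%nat -> rsum n (gibbsA k T n E) = 1.
Proof.
  intros Hn; pose proof (partZ_pos k T n E Hn).
  rewrite (rsum_ext n _ (fun i => / partZ k T n E * bwidth k T E i)) by (intros; unfold gibbsA, Rdiv; ring).
  rewrite rsum_scal; unfold partZ in *; field; lra.
Qed.

(* Height of the block of level [i] in the Gibbs rescaling: population / block width. *)
Definition gibbs_height (k T : R) (E lam : nat -> R) (i : nat) : R :=
  lam i * exp (E i / (k * T)).

Lemma gibbs_height_width k T E lam i : gibbs_height k T E lam i * bwidth k T E i = lam i.
Proof.
  unfold gibbs_height, bwidth; rewrite Rmult_assoc, <- exp_plus.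
  replace (E i / (k * T) + - E i / (k * T)) with 0 by (unfold Rdiv; ring).
  rewrite exp_0; ring.
Qed.

Lemma gibbs_state_height k T n E i : (0 < n)%nat -> gibbs_height k T E (gibbsA k T n E) i = / partZ k T n E.
Proof.
  intros Hn; pose proof (partZ_pos k T n E Hn); pose proof (bwidth_pos k T E i).
  apply (Rmult_eq_reg_r (bwidth k T E i)); [|lra].
  rewrite gibbs_height_width; unfold gibbsA; field; lra.
Qed.

Lemma gibbs_rescaling_profile k T n E lam g :
  (forall i, (i < n)%nat -> 0 <= lam i) -> IsGibbsRescaling k T n E lam g ->
  exists s, is_perm n s /\
    StepProfile n (fun j => bwidth k T E (s j)) (fun j => gibbs_height k T E lam (s j)) g.
Proof.
  intros Hlam [s [Hs [Hsorted [Hblock Htail]]]]; exists s; split; [exact Hs|split].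
  - intros j; apply bwidth_pos.
  - intros j Hj; apply Rmult_le_pos; [apply Hlam, (proj1 Hs), Hj|apply Rlt_le, exp_pos].
  - exact Hsorted.
  - exact Hblock.
  - intros x Hx; apply Htail; unfold partZ; rewrite <- (rsum_perm n s (bwidth k T E) Hs); exact Hx.
Qed.

Lemma gibbs_profile_mass k T E lam s j :
  rsum j (fun t => gibbs_height k T E lam (s t) * bwidth k T E (s t)) = rsum j (fun t => lam (s t)).
Proof. apply rsum_ext; intros; apply gibbs_height_width. Qed.

Lemma crossing_index (Q : nat -> R) c n :
  Q 0%nat < c -> c <= Q n -> exists J, (J < n)%nat /\ Q J < c /\ c <= Q (S J).
Proof.
  induction n as [|n IH]; intros H0 Hn; [lra|].
  destruct (Rlt_le_dec (Q n) c) as [Hlt|Hle].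
  - exists n; split; [lia|split; assumption].
  - destruct (IH H0 Hle) as [J [HJ HQ]]; exists J; split; [lia|exact HQ].
Qed.

Lemma quantile_rescale (w h : nat -> R) J c Z : 0 < Z -> h J <> 0 ->
  quantile (fun j => w j / Z) (fun j => h j * Z) J c = quantile w h J c / Z.
Proof.
  intros HZ HhJ; unfold quantile.
  rewrite (rsum_ext J (fun t => h t * Z * (w t / Z)) (fun t => h t * w t)) by (intros; field; lra).
  rewrite (rsum_ext J (fun t => w t / Z) (fun t => / Z * w t)) by (intros; unfold Rdiv; ring).
  rewrite rsum_scal; field; lra.
Qed.

Lemma ln_ratio_log2 a b : 0 < a -> 0 < b -> ln (a / b) = ln 2 * - log2 (b / a).
Proof.
  intros Ha Hb; unfold log2.
  assert (0 < ln 2) by (rewrite <- ln_1; apply ln_increasing; lra).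
  replace (a / b) with (/ (b / a)) by (field; lra).
  rewrite ln_Rinv by (apply Rdiv_lt_0_compat; assumption); field; lra.
Qed.

Section GibbsQuantile.
Variables (k T : R) (n : nat) (E P : nat -> R) (eps : R) (grho gsigma : R -> R) (s s' : nat -> nat) (J : nat).
Hypotheses (n_pos : (0 < n)%nat) (eps_range : 0 <= eps < 1)
  (Hs : is_perm n s) (Hs' : is_perm n s')
  (Hrho : StepProfile n (fun j => bwidth k T E (s j)) (fun j => gibbs_height k T E P (s j)) grho)
  (Hsigma : StepProfile n (fun j => bwidth k T E (s' j)) (fun j => gibbs_height k T E (gibbsA k T n E) (s' j)) gsigma)
  (J_lt : (J < n)%nat)
  (below_J : rsum J (fun t => P (s t)) < 1 - eps)
  (reach_J : 1 - eps <= rsum (S J) (fun t => P (s t))).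

Local Notation wr := (fun j => bwidth k T E (s j)).
Local Notation hr := (fun j => gibbs_height k T E P (s j)).
Local Notation Z := (partZ k T n E).
Local Notation x := (quantile wr hr J (1 - eps)).

Lemma rho_below_J : rsum J (fun t => hr t * wr t) < 1 - eps.
Proof. cbv beta; rewrite gibbs_profile_mass; exact below_J. Qed.

Lemma rho_reach_J : 1 - eps <= rsum (S J) (fun t => hr t * wr t).
Proof. cbv beta; rewrite gibbs_profile_mass; exact reach_J. Qed.

Lemma quantile_pos : 0 < x.
Proof.
  pose proof (quantile_in_block n wr hr grho Hrho J (1 - eps) rho_below_J rho_reach_J).
  pose proof (edge_nonneg n wr hr grho Hrho J); lra.
Qed.

Lemma work_value : WorkIs k T eps grho gsigma (k * T * ln (Z / x)).
Proof.
  assert (HZ : rsum n (fun j => bwidth k T E (s' j)) = Z) by (apply rsum_perm, Hs').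
  assert (Hmass : rsum n (fun t => gibbs_height k T E (gibbsA k T n E) (s' t) * bwidth k T E (s' t)) = 1)
    by (rewrite gibbs_profile_mass, rsum_perm by exact Hs'; apply gibbsA_sum, n_pos).
  assert (Hfirst : gibbs_height k T E (gibbsA k T n E) (s' 0%nat) = / rsum n (fun j => bwidth k T E (s' j)))
    by (rewrite HZ; apply gibbs_state_height, n_pos).
  exists (Z / x); split; [|reflexivity].
  apply (IsMaxOf_ext (cumul_mixed_set (RInt grho 0) (RInt gsigma 0) (1 - eps))).
  { intros m; symmetry; apply mixed_set_cumulative; [lra|intros b Hb..].
    - apply (profile_integrable n _ _ grho Hrho); lra.
    - apply (profile_integrable n _ _ gsigma Hsigma); lra. }
  apply cumul_mixedness_max.
  - lra.
  - apply quantile_pos.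
  - apply partZ_pos, n_pos.
  - apply (cumul_mono n _ _ grho Hrho).
  - apply (cumul_star_shaped n _ _ grho Hrho).
  - apply (cumul_at_quantile n _ _ grho Hrho); [exact J_lt|apply rho_below_J|apply rho_reach_J].
  - apply (cumul_below_quantile n _ _ grho Hrho); [exact J_lt|apply rho_below_J|apply rho_reach_J].
  - rewrite <- HZ; apply (flat_cumul_linear n _ _ gsigma Hsigma n_pos Hfirst).
  - apply (flat_cumul_le_one n _ _ gsigma Hsigma n_pos Hmass Hfirst).
  - rewrite <- HZ; apply (flat_cumul_total n _ _ gsigma Hsigma Hmass).
Qed.

(* The hypothesis-testing value: the linear program is a fractional knapsack with optimum [x / Z]. *)
Lemma lp_value : D0Is n P (gibbsA k T n E) eps (- log2 (x / Z)).
Proof.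
  pose proof (partZ_pos k T n E n_pos) as HZpos.
  pose proof (crossing_height_pos n wr hr grho Hrho J (1 - eps) rho_below_J rho_reach_J) as HhJ.
  assert (Hprod : forall j, P (s j) = hr j * Z * gibbsA k T n E (s j)).
  { intros j; rewrite <- (gibbs_height_width k T E P (s j)) at 1; unfold gibbsA; field; lra. }
  exists (x / Z); split; [|reflexivity].
  apply (IsMinOf_ext (D0_lp_set n (fun j => P (s j)) (fun j => gibbsA k T n E (s j)) eps)).
  { intros v; symmetry; apply lp_set_reindex, Hs. }
  rewrite <- (quantile_rescale wr hr J (1 - eps) Z HZpos) by lra.
  apply knapsack_minimum.
  - intros j _; apply Hprod.
  - intros j _; apply Rdiv_lt_0_compat; [apply bwidth_pos|exact HZpos].
  - intros j Hj; apply Rmult_le_compat_r; [lra|apply (height_noninc Hrho j Hj)].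
  - exact J_lt.
  - rewrite (rsum_ext J _ (fun t => P (s t))) by (intros; symmetry; apply Hprod); exact below_J.
  - rewrite (rsum_ext (S J) _ (fun t => P (s t))) by (intros; symmetry; apply Hprod); exact reach_J.
Qed.

End GibbsQuantile.

Theorem mainTheorem7 :
  forall (k T : R), 0 < k -> 0 < T ->
  forall (n : nat) (E P : nat -> R),
    (0 < n)%nat ->
    (forall i, (i < n)%nat -> 0 <= P i) ->
    rsum n P = 1 ->
  forall eps : R, 0 <= eps < 1 ->
  forall grho gsigma : R -> R,
    IsGibbsRescaling k T n E P grho ->
    IsGibbsRescaling k T n E (gibbsA k T n E) gsigma ->
  exists w d,
    WorkIs k T eps grho gsigma w /\
    D0Is n P (gibbsA k T n E) eps d /\
    w = k * T * ln 2 * d.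
Proof.
  intros k T _ _ n E P hn HP HP1 eps Heps grho gsigma Hrho Hsigma.
  destruct (gibbs_rescaling_profile k T n E P grho HP Hrho) as [s [Hs Hprho]].
  destruct (gibbs_rescaling_profile k T n E _ gsigma (fun i _ => gibbsA_nonneg k T n E i hn) Hsigma)
    as [s' [Hs' Hpsigma]].
  destruct (crossing_index (fun j => rsum j (fun t => P (s t))) (1 - eps) n) as [J [HJ [Hbelow Hreach]]].
  { simpl; lra. }
  { rewrite (rsum_perm n s P Hs); lra. }
  set (x := quantile (fun j => bwidth k T E (s j)) (fun j => gibbs_height k T E P (s j)) J (1 - eps)).
  exists (k * T * ln (partZ k T n E / x)), (- log2 (x / partZ k T n E)); split; [|split].
  - apply (work_value k T n E P eps grho gsigma s s' J); assumption.
  - apply (lp_value k T n E P eps grho s J); assumption.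
  - rewrite ln_ratio_log2; [ring|apply partZ_pos, hn|].
    apply (quantile_pos k T n E P eps grho s J); assumption.
Qed.
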